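(* Let $G=(V,E)$ be a finite Eulerian graph (every vertex has even degree). For $\underline{r}=(r_v)_{v\in V}\in\mathbb{Z}^V$ let $\varepsilon_{\underline{r}}(G)$ be the number of orientations of $G$ in which every vertex $v$ has in-degree exactly $r_v$. Then $\varepsilon_{\underline{r}}(G)$ is maximal (over all $\underline{r}\in\mathbb{Z}^V$) when $r_v=d_G(v)/2$ for every vertex $v$; that is, $\varepsilon_{\underline{r}}(G)\leq \varepsilon(G)$ for every $\underline{r}\in\mathbb{Z}^V$, where $\varepsilon(G)$ is the number of Eulerian orientations of $G$.
   Context: An Eulerian orientation is an orientation in which every vertex has in-degree equal to out-degree, i.e. in-degree $d_G(v)/2$ at each vertex $v$. *)

From mathcomp Require Import all_boot all_order all_algebra.
Set Implicit Arguments. Unset Strict Implicit. Unset Printing Implicit Defensive.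

(* A finite (multi)graph: vertex type V, edge type E, each edge e has
   endpoints (ends e).1 and (ends e).2 (loops and parallel edges allowed). *)

Section Graph.
Variables (V E : finType) (ends : E -> V * V).

(* degree: each endpoint occurrence counts once, so a loop counts twice *)
Definition deg (v : V) : nat :=
  #|[set e : E | (ends e).1 == v]| + #|[set e : E | (ends e).2 == v]|.

Definition eulerian_graph : Prop := forall v : V, ~~ odd (deg v).

Definition head (o : {ffun E -> bool}) (e : E) : V :=
  if o e then (ends e).2 else (ends e).1.

Definition indeg (o : {ffun E -> bool}) (v : V) : nat :=
  #|[set e : E | head o e == v]|.

Definition n_orient (r : V -> int) : nat :=
  #|[set o : {ffun E -> bool} | [forall v : V, Posz (indeg o v) == r v]]|.

Definition n_eulerian_orient : nat :=
  #|[set o : {ffun E -> bool} | [forall v : V, indeg o v == (deg v)./2]]|.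

End Graph.

(* Count pairs (o, o') of orientations with in-degrees r by the set H of edges
   on which they differ: o' = flip H o has the same in-degrees as o exactly when
   o is Eulerian on H, and then o restricted to the rest of the graph has
   in-degrees r - d_H/2.  Hence eps_r(G)^2 = eps_r(G) + sum over nonempty H of
   eps(H) * eps_{r - d_H/2}(G - H), and by induction on the number of edges each
   summand is largest for r = d_G/2.  As n |-> n(n-1) is increasing, this gives
   eps_r(G) <= eps(G), provided eps(G) > 0.  An Eulerian orientation exists
   because, more generally, when d + [s] + [t] is even everywhere there is an
   orientation carrying a unit flow from s to t: orient an edge away from s and
   recurse with its other end as the new source. *)

From Pilot Require Import Defs.
From mathcomp Require Import all_boot all_order all_algebra zify.
Set Implicit Arguments. Unset Strict Implicit. Unset Printing Implicit Defensive.

Lemma card_sum_pred (T : finType) (A : {pred T}) (P : pred T) :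
  #|[set x in A | P x]| = \sum_(x in A) P x.
Proof.
rewrite (eq_bigr (fun x => if P x then 1 else 0)); last by move=> x _; case: (P x).
by rewrite -big_mkcondr sum1_card; apply: eq_card => x; rewrite !inE.
Qed.

Lemma andb_forall (T : finType) (P Q : pred T) :
  [forall x, P x] && [forall x, Q x] = [forall x, P x && Q x].
Proof.
apply/andP/forallP => [[/forallP P_all /forallP Q_all] x | PQ_all].
  by rewrite P_all Q_all.
by split; apply/forallP => x; case/andP: (PQ_all x).
Qed.

Lemma leq_sq_excess (x y a b : nat) :
  x * x = x + a -> y * y = y + b -> a <= b -> 0 < y -> x <= y.
Proof.
move=> x_sq y_sq le_ab y_gt0; rewrite leqNgt; apply/negP => lt_yx.
case: x x_sq lt_yx => // x x_sq lt_yx.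
have := leq_mul lt_yx (ltnSE lt_yx); nia.
Qed.

Section Orientations.
Variables (V E : finType) (ends : E -> V * V).
Local Notation head := (Defs.head ends).

Definition tail (o : {ffun E -> bool}) (e : E) : V :=
  if o e then (ends e).1 else (ends e).2.

Definition indeg_on (F : {set E}) (o : {ffun E -> bool}) (v : V) : nat :=
  \sum_(e in F) (head o e == v).

Definition outdeg_on (F : {set E}) (o : {ffun E -> bool}) (v : V) : nat :=
  \sum_(e in F) (tail o e == v).

Definition deg_on (F : {set E}) (v : V) : nat :=
  \sum_(e in F) (((ends e).1 == v) + ((ends e).2 == v)).

Definition half_deg (F : {set E}) (v : V) : int := Posz (deg_on F v)./2.

Definition even_degrees (F : {set E}) : Prop := forall v, ~~ odd (deg_on F v).

Lemma sum_subset_split (f : E -> nat) (H F : {set E}) : H \subset F ->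
  \sum_(e in F) f e = \sum_(e in H) f e + \sum_(e in F :\: H) f e.
Proof. by move=> /setIidPr HF; rewrite (big_setID H) HF. Qed.

Lemma deg_on_split (F : {set E}) (o : {ffun E -> bool}) v :
  deg_on F v = indeg_on F o v + outdeg_on F o v.
Proof.
rewrite -big_split; apply: eq_bigr => e _.
by rewrite /head /tail; case: (o e); rewrite // addnC.
Qed.

Lemma eq_indeg_on (F : {set E}) (o o' : {ffun E -> bool}) v :
  {in F, o =1 o'} -> indeg_on F o v = indeg_on F o' v.
Proof. by move=> eq_oo'; apply: eq_bigr => e /eq_oo'; rewrite /head => ->. Qed.

Lemma eq_outdeg_on (F : {set E}) (o o' : {ffun E -> bool}) v :
  {in F, o =1 o'} -> outdeg_on F o v = outdeg_on F o' v.
Proof. by move=> eq_oo'; apply: eq_bigr => e /eq_oo'; rewrite /tail => ->. Qed.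

Definition flow_orientation (F : {set E}) (s t : V) (o : {ffun E -> bool}) : Prop :=
  forall v, indeg_on F o v + (v == s) = outdeg_on F o v + (v == t).

Lemma flow_orientation_setD1 (F : {set E}) e s t (o : {ffun E -> bool}) :
  e \in F -> tail o e = s -> flow_orientation (F :\ e) (head o e) t o ->
  flow_orientation F s t o.
Proof.
move=> eF tail_e flow_o v; have := flow_o v.
rewrite /indeg_on /outdeg_on !(big_setD1 e eF) /= tail_e.
by rewrite -/(indeg_on _ _ v) -/(outdeg_on _ _ v) !(eq_sym v); lia.
Qed.

Lemma exists_flow_orientation (F : {set E}) s t :
  (forall v, ~~ odd (deg_on F v + (v == s) + (v == t))) ->
  exists o, flow_orientation F s t o.
Proof.
have [n] := ubnP #|F|; elim: n F s t => // n IHn F s t ltFn.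
have from_incident e s' t' : e \in F -> ((ends e).1 == s') || ((ends e).2 == s') ->
    (forall v, ~~ odd (deg_on F v + (v == s') + (v == t'))) ->
    exists o, flow_orientation F s' t' o.
  move=> eF inc par; pose b := (ends e).1 == s'.
  pose h := if b then (ends e).2 else (ends e).1.
  have tail_b : (if b then (ends e).1 else (ends e).2) = s'.
    by rewrite /b; case: eqP inc => //= _ /eqP.
  have ends_e v : ((ends e).1 == v) + ((ends e).2 == v) = (h == v) + (s' == v).
    by rewrite -tail_b /h; case: (b); rewrite // addnC.
  have [o' flow_o'] : exists o', flow_orientation (F :\ e) h t' o'.
    apply: IHn; first by rewrite (cardsD1 e) eF in ltFn.
    move=> v; have := par v; rewrite /deg_on (big_setD1 e eF) /= -/(deg_on _ v) ends_e.
    by rewrite !(eq_sym v); lia.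
  pose o := [ffun x => if x == e then b else o' x].
  exists o; apply: (flow_orientation_setD1 eF); first by rewrite /tail ffunE eqxx.
  have eq_o : {in F :\ e, o =1 o'}.
    by move=> x; rewrite !inE /o ffunE => /andP[/negbTE -> _].
  rewrite /head ffunE eqxx -/h => v.
  by rewrite (eq_indeg_on _ eq_o) (eq_outdeg_on _ eq_o) flow_o'.
case: (eqVneq s t) => [<- | neq_st] par.
  case: (set_0Vmem F) => [-> | [e eF]].
    by exists [ffun=> false] => v; rewrite /indeg_on /outdeg_on !big_set0.
  have inc_e : ((ends e).1 == (ends e).1) || ((ends e).2 == (ends e).1) by rewrite eqxx.
  have par_e v : ~~ odd (deg_on F v + (v == (ends e).1) + (v == (ends e).1)).
    by have := par v; lia.
  have [o flow_o] := from_incident e _ _ eF inc_e par_e.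
  by exists o => v; have := flow_o v; lia.
have [e eF inc] : exists2 e, e \in F & ((ends e).1 == s) || ((ends e).2 == s).
  apply/exists_inP; apply: contraLR (par s) => /exists_inPn no_inc.
  rewrite /deg_on big1 ?eqxx ?(negbTE neq_st) //.
  by move=> e /no_inc /norP[/negbTE -> /negbTE ->].
exact: from_incident e s t eF inc par.
Qed.

(* An orientation of the subgraph with edge set [F] is represented by an
   [o : {ffun E -> bool}] that vanishes outside [F]. *)
Definition supported (F : {set E}) (o : {ffun E -> bool}) : bool :=
  [forall e, o e ==> (e \in F)].

Definition restr (F : {set E}) (o : {ffun E -> bool}) : {ffun E -> bool} :=
  [ffun e => (e \in F) && o e].

Definition flip (H : {set E}) (o : {ffun E -> bool}) : {ffun E -> bool} :=
  [ffun e => (e \in H) (+) o e].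

Lemma supportedP (F : {set E}) (o : {ffun E -> bool}) :
  reflect (forall e, o e -> e \in F) (supported F o).
Proof. by apply: (iffP forallP) => sub_oF e; apply/implyP; apply: sub_oF. Qed.

Lemma supported_restr (F : {set E}) (o : {ffun E -> bool}) : supported F (restr F o).
Proof. by apply/supportedP => e; rewrite ffunE => /andP[]. Qed.

Lemma supported_flip (F H : {set E}) (o : {ffun E -> bool}) : H \subset F ->
  supported F (flip H o) = supported F o.
Proof.
move=> HF; apply/supportedP/supportedP => sub_oF e; have := sub_oF e;
  by rewrite ffunE; case: (boolP (e \in H)) => [/(subsetP HF) ->|] //= _.
Qed.

Lemma indeg_on_restr (F : {set E}) (o : {ffun E -> bool}) v :
  indeg_on F (restr F o) v = indeg_on F o v.
Proof. by apply: eq_indeg_on => e eF; rewrite ffunE eF. Qed.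

Lemma outdeg_on_restr (F : {set E}) (o : {ffun E -> bool}) v :
  outdeg_on F (restr F o) v = outdeg_on F o v.
Proof. by apply: eq_outdeg_on => e eF; rewrite ffunE eF. Qed.

Lemma indeg_on_flip (H : {set E}) (o : {ffun E -> bool}) v :
  indeg_on H (flip H o) v = outdeg_on H o v.
Proof. by apply: eq_bigr => e eH; rewrite /head /tail ffunE eH; case: (o e). Qed.

Lemma restr_setU_inj (H K : {set E}) :
  {in [pred o | supported (H :|: K) o] &, injective (fun o => (restr H o, restr K o))}.
Proof.
move=> o o' /supportedP so /supportedP so' [/ffunP eqH /ffunP eqK].
apply/ffunP => e; case: (boolP (e \in H :|: K)) => [|eHK].
  by rewrite inE => /orP[] eX; [move: (eqH e) | move: (eqK e)]; rewrite !ffunE eX.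
by rewrite (contraNF (so e) eHK) (contraNF (so' e) eHK).
Qed.

Lemma card_supported_setU (H K : {set E}) (p q : pred {ffun E -> bool}) :
  [disjoint H & K] ->
  #|[set o | supported (H :|: K) o & p (restr H o) && q (restr K o)]| =
  #|[set a | supported H a & p a]| * #|[set b | supported K b & q b]|.
Proof.
move=> dis_HK; rewrite -cardsX -(card_in_imset (sub_in2 _ (@restr_setU_inj H K))).
  2: by move=> o; rewrite !inE => /andP[].
apply: eq_card => -[a b]; apply/imsetP/idP => [[o] | ].
  rewrite !inE => /andP[_ /andP[po qo]] [-> ->] /=.
  by rewrite !supported_restr po qo.
rewrite !inE /= => /andP[/andP[/supportedP Ha pa] /andP[/supportedP Kb qb]].
have b_notH e : e \in H -> b e = false.
  by move=> eH; apply: contraTF eH => /Kb /(disjointFl dis_HK) ->.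
have a_notK e : e \in K -> a e = false.
  by move=> eK; apply: contraTF eK => /Ha /(disjointFr dis_HK) ->.
pose o := [ffun e => a e || b e].
have [oH oK] : restr H o = a /\ restr K o = b.
  split; apply/ffunP => e; rewrite !ffunE.
    by case: (boolP (e \in H)) => eH /=; [rewrite b_notH ?orbF | rewrite (contraNF (Ha e))].
  by case: (boolP (e \in K)) => eK /=; [rewrite a_notK | rewrite (contraNF (Kb e))].
exists o; last by rewrite oH oK.
rewrite inE oH oK pa qb !andbT.
by apply/supportedP => e; rewrite ffunE inE => /orP[/Ha | /Kb] ->; rewrite ?orbT.
Qed.

Lemma flip_diff (o o' : {ffun E -> bool}) : flip [set e | o e (+) o' e] o = o'.
Proof. by apply/ffunP => e; rewrite !ffunE inE addbAC addbb. Qed.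

Lemma diff_flip (H : {set E}) (o : {ffun E -> bool}) : [set e | o e (+) flip H o e] = H.
Proof. by apply/setP => e; rewrite !inE ffunE addbCA addbb addbF. Qed.

(* A pair (o, o') of elements of A is classified by the set of edges on which
   o and o' differ; the empty set gives the diagonal. *)
Lemma card_sq_flip (A : {set {ffun E -> bool}}) :
  #|A| * #|A| = #|A| + \sum_(H : {set E} | H != set0) #|[set o in A | flip H o \in A]|.
Proof.
have card_flips o : #|A| = \sum_(H : {set E}) (flip H o \in A).
  rewrite -sum1_card (reindex (flip^~ o)) /=.
    by rewrite big_mkcond; apply: eq_bigr => H _; case: (_ \in A).
  apply: onW_bij; exists (fun o' : {ffun E -> bool} => [set e | o e (+) o' e]).
    by move=> H; rewrite diff_flip.
  by move=> o'; rewrite flip_diff.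
rewrite -sum_nat_const (eq_bigr _ (fun o _ => card_flips o)) exchange_big /=.
rewrite (bigD1 set0) //=; congr (_ + _); last by apply: eq_bigr => H _; rewrite card_sum_pred.
have flip0 o : flip set0 o = o by apply/ffunP => e; rewrite ffunE inE.
by rewrite -sum1_card; apply: eq_bigr => o oA; rewrite flip0 oA.
Qed.

Definition orient_on (F : {set E}) (r : V -> int) : {set {ffun E -> bool}} :=
  [set o | supported F o & [forall v, Posz (indeg_on F o v) == r v]].

Definition balanced_on (H : {set E}) : {set {ffun E -> bool}} :=
  [set o | supported H o & [forall v, indeg_on H o v == outdeg_on H o v]].

Lemma eq_orient_on (F : {set E}) (r r' : V -> int) :
  r =1 r' -> orient_on F r = orient_on F r'.
Proof.
by move=> eq_r; apply/setP => o; rewrite !inE (eq_forallb (fun v => congr1 _ (eq_r v))).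
Qed.

Lemma deg_on_balanced (H : {set E}) (o : {ffun E -> bool}) v :
  o \in balanced_on H -> deg_on H v = (indeg_on H o v).*2.
Proof.
by rewrite inE => /andP[_ /forallP/(_ v)/eqP bal]; rewrite (deg_on_split H o) -bal addnn.
Qed.

Lemma balanced_sub_orient_on (F : {set E}) : balanced_on F \subset orient_on F (half_deg F).
Proof.
apply/subsetP => o oF; have := oF; rewrite !inE => /andP[-> _] /=.
by apply/forallP => v; rewrite /half_deg (deg_on_balanced v oF) doubleK.
Qed.

Lemma even_degrees_setD (F H : {set E}) (o : {ffun E -> bool}) :
  H \subset F -> o \in balanced_on H -> even_degrees F -> even_degrees (F :\: H).
Proof.
move=> HF oH evenF v; have := evenF v; rewrite /deg_on (sum_subset_split _ HF).
by rewrite -!/(deg_on _ v) (deg_on_balanced v oH) oddD odd_double.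
Qed.

Lemma half_deg_setD (F H : {set E}) (o : {ffun E -> bool}) v :
  H \subset F -> o \in balanced_on H ->
  half_deg (F :\: H) v = (half_deg F v - half_deg H v)%R.
Proof.
move=> HF oH; rewrite /half_deg /deg_on (sum_subset_split _ HF) -!/(deg_on _ v).
by rewrite (deg_on_balanced v oH); lia.
Qed.

Lemma exists_balanced (F : {set E}) : even_degrees F -> exists o, o \in balanced_on F.
Proof.
move=> evenF; case: (set_0Vmem F) => [-> | [e _]].
  exists [ffun=> false]; rewrite inE; apply/andP; split; apply/forallP => x.
    by rewrite ffunE.
  by rewrite /indeg_on /outdeg_on !big_set0.
have [|o flow_o] := @exists_flow_orientation F (ends e).1 (ends e).1.
  by move=> v; have := evenF v; lia.
exists (restr F o); rewrite inE supported_restr; apply/forallP => v.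
by rewrite indeg_on_restr outdeg_on_restr; have := flow_o v; lia.
Qed.

Lemma flip_pairs_outside (F H : {set E}) (r : V -> int) : ~~ (H \subset F) ->
  [set o in orient_on F r | flip H o \in orient_on F r] = set0.
Proof.
case/subsetPn=> e eH eNF; apply/setP => o; rewrite !inE.
apply/negP => /andP[/andP[/supportedP so _] /andP[/supportedP sfo _]].
by move: (sfo e); rewrite ffunE eH (contraNF (so e) eNF) (negbTE eNF) => /(_ isT).
Qed.

(* o and flip H o have the same in-degrees iff o is Eulerian on H. *)
Lemma card_flip_pairs (F H : {set E}) (r : V -> int) : H \subset F ->
  #|[set o in orient_on F r | flip H o \in orient_on F r]| =
  #|balanced_on H| * #|orient_on (F :\: H) (fun v => r v - half_deg H v)%R|.
Proof.
move=> HF; have F_split : H :|: F :\: H = F by rewrite -{2}(setID F H) (setIidPr HF).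
have dis_H : [disjoint H & F :\: H] by rewrite -setI_eq0 setIDA setDIl setDv set0I.
rewrite -card_supported_setU // F_split; apply: eq_card => o.
rewrite !inE supported_flip //; case: (supported F o) => //=.
rewrite !andb_forall; apply: eq_forallb => v.
have flip_out : indeg_on (F :\: H) (flip H o) v = indeg_on (F :\: H) o v.
  by apply: eq_indeg_on => e; rewrite inE ffunE => /andP[/negbTE ->].
rewrite /indeg_on !(sum_subset_split _ HF) -!/(indeg_on _ _ v) indeg_on_flip flip_out.
rewrite !indeg_on_restr outdeg_on_restr /half_deg (deg_on_split H o).
by apply/andP/andP => -[/eqP h1 /eqP h2]; split; apply/eqP; lia.
Qed.

Lemma card_orient_on_le (F : {set E}) (r : V -> int) : even_degrees F ->
  #|orient_on F r| <= #|orient_on F (half_deg F)|.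
Proof.
have [n] := ubnP #|F|; elim: n F r => // n IHn F r ltFn evenF.
apply: leq_sq_excess (card_sq_flip _) (card_sq_flip _) _ _; last first.
  have [o oF] := exists_balanced evenF.
  by apply/card_gt0P; exists o; apply: (subsetP (balanced_sub_orient_on F)).
apply: leq_sum => H H_neq0; have [HF | notHF] := boolP (H \subset F); last first.
  by rewrite flip_pairs_outside ?cards0.
rewrite !card_flip_pairs //; have [-> | [o oH]] := set_0Vmem (balanced_on H).
  by rewrite cards0.
rewrite leq_mul2l (eq_orient_on _ (fun v => esym (half_deg_setD v HF oH))).
apply/orP; right; apply: IHn; last exact: even_degrees_setD oH evenF.
have := cardsID H F; rewrite (setIidPr HF); have : 0 < #|H| by rewrite card_gt0.
lia.
Qed.

End Orientations.

Lemma indeg_on_setT (V E : finType) (ends : E -> V * V) (o : {ffun E -> bool}) v :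
  indeg ends o v = indeg_on ends setT o v.
Proof. by rewrite /indeg /indeg_on -card_sum_pred; apply: eq_card => e; rewrite !inE. Qed.

Lemma deg_on_setT (V E : finType) (ends : E -> V * V) v : deg ends v = deg_on ends setT v.
Proof.
rewrite /deg /deg_on big_split /= -!card_sum_pred.
by congr (_ + _); apply: eq_card => e; rewrite !inE.
Qed.

Theorem theorem1p11 (V E : finType) (ends : E -> V * V) :
  eulerian_graph ends ->
  forall r : V -> int, n_orient ends r <= n_eulerian_orient ends.
Proof.
move=> eulerian r.
have supported_setT o : supported setT o by apply/supportedP => e; rewrite inE.
have -> : n_orient ends r = #|orient_on ends setT r|.
  apply: eq_card => o; rewrite !inE supported_setT.
  by apply: eq_forallb => v; rewrite indeg_on_setT.
have -> : n_eulerian_orient ends = #|orient_on ends setT (half_deg ends setT)|.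
  apply: eq_card => o; rewrite !inE supported_setT.
  by apply: eq_forallb => v; rewrite indeg_on_setT deg_on_setT eqz_nat.
by apply: card_orient_on_le => v; rewrite -deg_on_setT.
Qed.
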